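(* Let $a,b,d\in\mathbb C$ with $a\notin\mathbb Z$ and $d\notin\{0,-1,-2,\dots\}$. Then, as an identity of formal power series in $x,y$, $${}_1F_1(a;d;x)\,{}_1F_1(b;1-a;y)=\mathrm H_4(a,b;d;x,-y)+\sum_{k=1}^\infty\sum_{l=1}^k\frac{(-1)^{k-l}(k-1)!}{(l-1)!\,l!\,(k-l)!}\,\frac{(b)_k}{(1-a)_k(1-a)_{k-l}(d)_l}\,x^ly^k\,\mathrm H_4(a-k+l,b+k;d+l;x,-y).$$
   Context: Pochhammer symbol: $(\lambda)_k=\Gamma(\lambda+k)/\Gamma(\lambda)$ for every integer $k$ (possibly negative) whenever defined; $(\lambda)_0=1$. ${}_1F_1(a;c;x)=\sum_{k\ge0}\frac{(a)_k}{(c)_k k!}x^k$. Confluent Horn function $\mathrm H_4(a,b;d;x,y)=\sum_{p,q\ge0}\frac{(a)_{p-q}(b)_q}{(d)_p\,p!\,q!}x^py^q$. All functions are regarded as formal power series in $x,y$; the infinite double sum converges in the formal (degree) topology. *)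

(* Formal power series in x,y over a field R are represented
   by their coefficient functions: f p q = coefficient of x^p y^q. *)
From HB Require Import structures.
From mathcomp Require Import all_boot all_order all_algebra.
Set Implicit Arguments. Unset Strict Implicit. Unset Printing Implicit Defensive.
Import Order.TTheory GRing.Theory Num.Theory.
Local Open Scope ring_scope.

Section Defs.
Variable R : fieldType.

(* Pochhammer symbol (x)_k for an integer k:
   k = n >= 0 : x (x+1) ... (x+n-1);
   k = -(n+1) : 1 / ((x-1)(x-2)...(x-(n+1)))  ( = Gamma(x+k)/Gamma(x) ). *)
Definition poch (x : R) (k : int) : R :=
  match k with
  | Posz n => \prod_(i < n) (x + i%:R)
  | Negz n => (\prod_(i < n.+1) (x - (i.+1)%:R))^-1
  end.

Definition pochn (x : R) (n : nat) : R := poch x n%:Z.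

Definition fps2 := nat -> nat -> R.

Definition fps2_mul (f g : fps2) : fps2 := fun p q =>
  \sum_(i < p.+1) \sum_(j < q.+1) f i j * g (p - i)%N (q - j)%N.

Definition xser (f : nat -> R) : fps2 := fun p q => if q == 0%N then f p else 0.
Definition yser (f : nat -> R) : fps2 := fun p q => if p == 0%N then f q else 0.

Definition negy (f : fps2) : fps2 := fun p q => (-1) ^+ q * f p q.

Definition mono (l k : nat) : fps2 := fun p q => if (p == l) && (q == k) then 1 else 0.

(* F k sums to S in the formal (coefficientwise, discrete) topology *)
Definition fps2_hasSum (F : nat -> fps2) (S : fps2) : Prop :=
  forall p q, exists N, forall n, (N <= n)%N -> \sum_(k < n) F k p q = S p q.

Definition F11 (a c : R) : nat -> R := fun k =>
  pochn a k / (pochn c k * (k`!)%:R).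

Definition H4 (a b d : R) : fps2 := fun p q =>
  poch a (p%:Z - q%:Z) * pochn b q / (pochn d p * (p`!)%:R * (q`!)%:R).

Definition ccoef (a b d : R) (k l : nat) : R :=
  (-1) ^+ (k - l) * ((k.-1)`!)%:R / (((l.-1)`!)%:R * (l`!)%:R * ((k - l)`!)%:R)
  * (pochn b k / (pochn (1 - a) k * pochn (1 - a) (k - l) * pochn d l)).

Definition rhs_term (a b d : R) (k : nat) : fps2 :=
  if k is 0 then negy (H4 a b d)
  else fun p q => \sum_(1 <= l < k.+1)
         ccoef a b d k l *
         fps2_mul (mono l k)
           (negy (H4 (a - k%:R + l%:R) (b + k%:R) (d + l%:R))) p q.

End Defs.

From HB Require Import structures.
From mathcomp Require Import all_boot all_order all_algebra.
From mathcomp Require Import zify ring.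
Import Order.TTheory GRing.Theory Num.Theory.
Set Implicit Arguments. Unset Strict Implicit.
Local Open Scope ring_scope.

(* Compare coefficients of x^p y^q.  Only the terms k <= q contribute.  For
   fixed k the reflection (a - j)_(j + z) = (-1)^j (1 - a)_j (a)_z takes every
   shifted Pochhammer symbol back to a, after which the inner sum over l is the
   Vandermonde sum sum_l C(k-1, l-1) C(p, l) = (p)_k / k!.  The remaining sum
   over k is the Chu-Vandermonde identity
   sum_k C(q, k) (p)_k (a - q)_(q-k) = (a + p - q)_q, and finally
   (a)_(p-q) (a + p - q)_q = (a)_p. *)

Section Pochhammer.
Variable R : fieldType.
Implicit Types (x y : R) (z w : int).

Lemma pochn0 x : pochn x 0 = 1.
Proof. exact: big_ord0. Qed.

Lemma pochnS x n : pochn x n.+1 = pochn x n * (x + n%:R).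
Proof. by rewrite /pochn /= big_ord_recr. Qed.

Lemma pochnD x m n : pochn x (m + n) = pochn x m * pochn (x + m%:R) n.
Proof.
elim: n => [|n IH]; first by rewrite addn0 pochn0 mulr1.
by rewrite addnS !pochnS IH natrD addrA mulrA.
Qed.

Lemma pochnSl x n : pochn x n.+1 = x * pochn (x + 1) n.
Proof. by rewrite -add1n pochnD /pochn /= big_ord1 /= addr0. Qed.

Lemma pochn_neq0 x n : (forall i : nat, x + i%:R != 0) -> pochn x n != 0.
Proof.
move=> x_neq0; elim: n => [|n IH]; first by rewrite pochn0 oner_neq0.
by rewrite pochnS mulf_neq0.
Qed.

Lemma pochn_reflect y n : pochn (- y - n%:R + 1) n = (-1) ^+ n * pochn y n.
Proof.
elim: n y => [|n IH] y; first by rewrite !pochn0 mulr1.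
rewrite pochnSl.
have -> : - y - n.+1%:R + 1 + 1 = - y - n%:R + 1 by rewrite -addn1 natrD; ring.
by rewrite IH pochnS exprS -addn1 natrD; ring.
Qed.

Lemma pochn_natr p k : pochn (p%:R : R) k = ((p + k).-1 ^_ k)%:R.
Proof.
elim: k => [|k IH]; first by rewrite pochn0 ffactn0.
by rewrite pochnS IH addnS ffactnS -natrD -natrM mulnC.
Qed.

Lemma pochn_chu_vandermonde x y n :
  pochn (x + y) n = \sum_(k < n.+1) 'C(n, k)%:R * pochn x k * pochn y (n - k).
Proof.
apply/esym; elim: n => [|n IH].
  by rewrite big_ord_recl big_ord0 /= !pochn0 addr0 !mulr1.
rewrite pochnS -IH mulr_suml big_ord_recl /= bin0 subn0.
under eq_bigr do rewrite binS natrD mulrDl mulrDl subSS.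
have split_term (k : 'I_n.+1) :
    'C(n, k)%:R * pochn x k * pochn y (n - k) * (x + y + n%:R)
  = 'C(n, k)%:R * pochn x k.+1 * pochn y (n - k)
    + 'C(n, k)%:R * pochn x k * pochn y (n - k).+1.
  have k_le_n : (k <= n)%N by rewrite -ltnS.
  by rewrite !pochnS natrB //; ring.
rewrite big_split /= (eq_bigr _ (fun k _ => split_term k)) big_split /= addrA addrC.
congr (_ + _).
rewrite [in RHS]big_ord_recl [in LHS]big_ord_recr /= bin0 subn0 bin_small //.
rewrite !mul0r addr0 mul1r; congr (_ + _).
by apply: eq_bigr => k _; rewrite /bump /= add1n subnSK.
Qed.

Definition nonint x := forall z, x + z%:~R != 0.

Lemma nonint_notin_int x : (forall z, x != z%:~R) -> nonint x.
Proof. by move=> x_notin z; rewrite addr_eq0 -intrN. Qed.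

Lemma nonintDz x z : nonint x -> nonint (x + z%:~R).
Proof. by move=> x_nonint w; rewrite -addrA -intrD. Qed.

Lemma poch_addz1 x z : nonint x -> poch x (z + 1) = poch x z * (x + z%:~R).
Proof.
move=> x_nonint; case: z => [n|[|n]].
- by rewrite -PoszD addn1 /poch big_ord_recr.
- have -> : (Negz 0 + 1 = 0)%R by [].
  rewrite /poch big_ord1 /= big_ord0 (_ : (Negz 0)%:~R = -1 :> R) // mulVf //.
  exact: (x_nonint (Negz 0)).
- have -> : (Negz n.+1 + 1 = Negz n)%R by rewrite !NegzE; lia.
  rewrite /poch (big_ord_recr n.+1) /= invfM -mulrA.
  have -> : (Negz n.+1)%:~R = - (n.+2)%:R :> R by rewrite NegzE mulrNz.
  by rewrite mulVf ?mulr1 //; have := x_nonint (Negz n.+1); rewrite NegzE mulrNz.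
Qed.

Lemma int_rec_uniq (h1 h2 c : int -> R) : (forall z, c z != 0) -> h1 0 = h2 0 ->
  (forall z, h1 (z + 1) = h1 z * c z) -> (forall z, h2 (z + 1) = h2 z * c z) ->
  forall z, h1 z = h2 z.
Proof.
move=> c_neq0 h0 rec1 rec2; elim/int_rect => [//|n IH|n IH].
  by rewrite -addn1 PoszD rec1 rec2 IH.
apply: (mulIf (c_neq0 (- n.+1%:Z))); rewrite -rec1 -rec2.
by have -> : (- n.+1%:Z + 1 = - n%:Z)%R by lia.
Qed.

Lemma pochD x z w : nonint x -> poch x (z + w) = poch x z * poch (x + z%:~R) w.
Proof.
move=> x_nonint; move: w; apply: (int_rec_uniq (c := fun w => x + (z + w)%:~R)).
- by move=> w; apply: x_nonint.
- by rewrite addr0 /poch /= big_ord0 mulr1.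
- by move=> w; rewrite addrA poch_addz1.
- move=> w; rewrite poch_addz1 ?mulrA ?intrD ?addrA //; exact: nonintDz.
Qed.

Lemma poch_subn_reflect x j z : nonint x ->
  poch (x - j%:R) (j%:Z + z) = (-1) ^+ j * pochn (1 - x) j * poch x z.
Proof.
move=> x_nonint; rewrite pochD; last by have := nonintDz (- j%:Z) x_nonint; rewrite intrN.
rewrite subrK; congr (_ * _).
have -> : x - j%:R = - (1 - x) - j%:R + 1 by ring.
exact: pochn_reflect.
Qed.

End Pochhammer.

Section FormalSeries.
Variable R : fieldType.

Lemma mulmonoE l k (G : fps2 R) p q : fps2_mul (mono R l k) G p q =
  if (l <= p)%N && (k <= q)%N then G (p - l)%N (q - k)%N else 0.
Proof.
transitivity (\sum_(i < p.+1 | i == l :> nat)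
                \sum_(j < q.+1 | j == k :> nat) G (p - i)%N (q - j)%N).
  rewrite /fps2_mul /mono [RHS]big_mkcond; apply: eq_bigr => i _.
  case: ifP => _ /=; last by rewrite big1 // => j _; rewrite mul0r.
  by rewrite [RHS]big_mkcond; apply: eq_bigr => j _; case: ifP; rewrite ?mul1r ?mul0r.
under eq_bigr => i _ do rewrite (big_ord1_eq _ (fun j => G (p - i)%N (q - j)%N)).
rewrite (big_ord1_eq _ (fun i => if (k < q.+1)%N then G (p - i)%N (q - k)%N else 0)).
by rewrite !ltnS; case: (l <= p)%N.
Qed.

Lemma xser_mul_yser (f g : nat -> R) p q :
  fps2_mul (xser f) (yser g) p q = f p * g q.
Proof.
rewrite /fps2_mul (eq_bigr (fun i : 'I_p.+1 => if (i : nat) == p then f p * g q else 0)).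
  by rewrite -big_mkcond (big_ord1_eq _ (fun=> f p * g q)) ltnS leqnn.
move=> i _; rewrite (bigD1 ord0) //= big1 => [|j /negbTE j_neq0]; last first.
  by rewrite /xser (_ : (j : nat) == 0%N = false) ?mul0r.
rewrite /xser /yser addr0 subn0 eqxx.
have [->|i_neq_p] := eqVneq (i : nat) p; first by rewrite subnn eqxx.
by rewrite subn_eq0 leqNgt ltn_neqAle i_neq_p -ltnS ltn_ord mulr0.
Qed.

End FormalSeries.

Lemma sum_bin_predn p k : (0 < k)%N ->
  \sum_(1 <= l < k.+1) 'C(k.-1, l.-1) * 'C(p, l) = 'C((p + k).-1, k).
Proof.
move=> k_gt0; have -> : ((p + k).-1 = p + k.-1)%N by lia.
rewrite -binomial.Vandermonde big_ord_recl /= subn0 (@bin_small k.-1 k); last by lia.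
rewrite muln0 add0n big_add1 /= big_mkord; apply: eq_bigr => i _.
have i_le : (i <= k.-1)%N by have := ltn_ord i; lia.
rewrite mulnC -[in LHS](bin_sub i_le); congr (_ * _); congr 'C(_, _); rewrite /bump /= add1n; lia.
Qed.

Section CharZero.
Variable R : numFieldType.

Lemma natr_fact_neq0 n : n`!%:R != 0 :> R.
Proof. by rewrite pnatr_eq0 -lt0n fact_gt0. Qed.

Lemma binr_fact n m : (m <= n)%N ->
  'C(n, m)%:R = n`!%:R / (m`!%:R * (n - m)`!%:R) :> R.
Proof.
move=> m_le_n; rewrite -(bin_fact m_le_n) !natrM mulfK //.
by rewrite mulf_neq0 // natr_fact_neq0.
Qed.

End CharZero.

Section Hypergeometric.
Variable R : numFieldType.
Variables a b d : R.
Hypothesis ha : forall z : int, a != z%:~R.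
Hypothesis hd : forall n : nat, d != - n%:R.

Let a_nonint : nonint a := nonint_notin_int ha.

Lemma pochn_shift_d_neq0 l n : pochn (d + l%:R) n != 0.
Proof. by apply: pochn_neq0 => i; rewrite -addrA -natrD addr_eq0. Qed.

Lemma pochn_d_neq0 n : pochn d n != 0.
Proof. by have := pochn_shift_d_neq0 0 n; rewrite addr0. Qed.

Lemma pochn_shift_1a_neq0 l n : pochn (1 - a + l%:R) n != 0.
Proof.
apply: pochn_neq0 => i; rewrite -addrA -natrD.
have := a_nonint (- (l + i).+1%:Z); apply: contra => /eqP h; apply/eqP.
transitivity (- (1 - a + (l + i)%:R)); last by rewrite h oppr0.
by rewrite intrN -pmulrn -addn1 natrD; ring.
Qed.

Lemma pochn_1a_neq0 n : pochn (1 - a) n != 0.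
Proof. by have := pochn_shift_1a_neq0 0 n; rewrite addr0. Qed.

Let term_scale p q k := (-1) ^+ (q - k) * pochn b q * poch a (p%:Z - q%:Z)
  / (pochn d p * p`!%:R * pochn (1 - a) k * (q - k)`!%:R).

Let coef_scale p q := pochn b q * poch a (p%:Z - q%:Z)
  / (pochn d p * p`!%:R * pochn (1 - a) q * q`!%:R).

Lemma rhs_term_mono_coef p q k l : (0 < l)%N -> (l <= k <= q)%N ->
  ccoef a b d k l * fps2_mul (mono R l k)
     (negy (H4 (a - k%:R + l%:R) (b + k%:R) (d + l%:R))) p q
  = ('C(k.-1, l.-1) * 'C(p, l))%:R * term_scale p q k.
Proof.
move=> l_gt0 /andP[l_le_k k_le_q]; rewrite mulmonoE k_le_q andbT.
case: leqP => [l_le_p|p_lt_l]; last by rewrite mulr0 (bin_small p_lt_l) muln0 mul0r.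
rewrite /negy /H4 /ccoef /term_scale.
have -> : a - k%:R + l%:R = a - (k - l)%:R by rewrite natrB //; ring.
have -> : ((p - l)%:Z - (q - k)%:Z = (k - l)%:Z + (p%:Z - q%:Z))%R by lia.
rewrite poch_subn_reflect; last exact: a_nonint.
have -> : pochn b q = pochn b k * pochn (b + k%:R) (q - k) by rewrite -pochnD subnKC.
have -> : pochn d p = pochn d l * pochn (d + l%:R) (p - l) by rewrite -pochnD subnKC.
rewrite natrM (binr_fact _ l_le_p) binr_fact; last by lia.
have -> : (k.-1 - l.-1 = k - l)%N by lia.
set s := (-1) ^+ (k - l).
have s_inv : s = s^-1 by rewrite /s -exprVn invrN1.
have s_neq0 : s != 0 by rewrite /s signr_eq0.
rewrite {1}s_inv; field.
by rewrite s_neq0 pochn_shift_d_neq0 pochn_d_neq0 !pochn_1a_neq0 !natr_fact_neq0.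
Qed.

Lemma rhs_term_coef p q k : (k <= q)%N ->
  rhs_term a b d k p q = 'C((p + k).-1, k)%:R * term_scale p q k.
Proof.
case: k => [|k] k_le_q.
  rewrite /= /negy /H4 /term_scale pochn0 subn0 addn0 bin0.
  by field; rewrite pochn_d_neq0 !natr_fact_neq0.
rewrite /rhs_term -sum_bin_predn // natr_sum mulr_suml.
apply: eq_big_nat => l /andP[l_gt0 l_le_k].
by rewrite rhs_term_mono_coef // -ltnS l_le_k.
Qed.

Lemma rhs_term_coef_chu p q k : (k <= q)%N ->
  'C((p + k).-1, k)%:R * term_scale p q k
  = coef_scale p q * ('C(q, k)%:R * pochn p%:R k * pochn (a - q%:R) (q - k)).
Proof.
move=> k_le_q; rewrite pochn_natr -bin_ffact natrM (binr_fact _ k_le_q) /term_scale /coef_scale.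
have -> : pochn (1 - a) q = pochn (1 - a) k * pochn (1 - a + k%:R) (q - k).
  by rewrite -pochnD subnKC.
have -> : a - q%:R = - (1 - a + k%:R) - (q - k)%:R + 1 by rewrite natrB //; ring.
rewrite pochn_reflect.
by field; rewrite pochn_d_neq0 pochn_1a_neq0 pochn_shift_1a_neq0 !natr_fact_neq0.
Qed.

Lemma rhs_term_eq0 p q k : (q < k)%N -> rhs_term a b d k p q = 0.
Proof.
case: k => [//|k] q_lt_k /=; rewrite big1 // => l _.
by rewrite mulmonoE (leqNgt k.+1 q) q_lt_k andbF mulr0.
Qed.

Lemma sum_rhs_term p q :
  \sum_(k < q.+1) rhs_term a b d k p q = F11 a d p * F11 b (1 - a) q.
Proof.
rewrite (eq_bigr (fun k : 'I_q.+1 =>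
    coef_scale p q * ('C(q, k)%:R * pochn p%:R k * pochn (a - q%:R) (q - k)))); last first.
  by move=> k _; rewrite rhs_term_coef ?rhs_term_coef_chu // -ltnS.
rewrite -mulr_sumr -pochn_chu_vandermonde /F11 /coef_scale.
have -> : pochn a p = poch a (p%:Z - q%:Z) * pochn (a + (p%:Z - q%:Z)%:~R) q.
  by rewrite /pochn -pochD ?subrK //; exact: a_nonint.
have -> : p%:R + (a - q%:R) = a + (p%:Z - q%:Z)%:~R by rewrite intrB; ring.
by field; rewrite pochn_d_neq0 pochn_1a_neq0 !natr_fact_neq0.
Qed.

End Hypergeometric.

Unset Implicit Arguments. Set Strict Implicit.
Theorem mainTheorem9 (C : numClosedFieldType) (a b d : C)
    (ha : forall z : int, a != z%:~R)
    (hd : forall n : nat, d != - n%:R) :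
  fps2_hasSum (rhs_term a b d)
    (fps2_mul (xser (F11 a d)) (yser (F11 b (1 - a)))).
Proof.
move=> p q; exists q.+1 => n /subnKC <-.
rewrite big_split_ord [X in _ + X = _]big1 => [|k _]; last first.
  by apply: rhs_term_eq0; rewrite ltnS leq_addr.
by rewrite addr0 sum_rhs_term // xser_mul_yser.
Qed.
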